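(* Let $k$ be a positive integer, $a=3k+2$, $S=\{a,a+1,a+2\}$, $G=\langle S\rangle$, $t=\lfloor 3k/2\rfloor$, $I_{i,k}=[ia,\,ia+2i]$ for $i\in[0,t+1]$, and $H_{7,k}=\bigcup_{i=0}^{t}I_{i,k}\cup[(t+1)a,\infty[$. Then: (1) $G=H_{7,k}$; (2) $I_{i,k}<I_{i+1,k}$ for every $i\in[0,t]$, and $I_{t,k}<[(t+1)a,\infty[$; (3) $H_{7,k}$ is a $3$-permutation numerical semigroup.
   Context: $\mathbb{N}=\{0,1,2,\dots\}$. A numerical semigroup is a submonoid $G$ of $(\mathbb{N},+,0)$ with $\mathbb{N}\setminus G$ finite; $\langle S\rangle$ is the submonoid generated by $S$. Writing the elements of a numerical semigroup as $0=g_0<g_1<g_2<\cdots$, it is an $n$-permutation numerical semigroup if it is generated by $\{g_1,\dots,g_n\}$ and for every $k\in\mathbb{N}$ the tuple $(g_{kn+1}\bmod n,\dots,g_{kn+n}\bmod n)$ contains exactly one representative of each residue class mod $n$. Notation: $[u,v]=\{x\in\mathbb{N}:u\le x\le v\}$, $[u,\infty[=\{x\in\mathbb{N}:x\ge u\}$; for nonempty $X,Y\subseteq\mathbb{N}$, $X<Y$ means $x<y$ for all $x\in X,y\in Y$. *)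

From mathcomp Require Import all_boot.
Set Implicit Arguments. Unset Strict Implicit. Unset Printing Implicit Defensive.

Inductive gen (S : nat -> Prop) : nat -> Prop :=
| gen0 : gen S 0
| genS x s : gen S x -> S s -> gen S (x + s).

Definition numerical_semigroup (G : pred nat) : Prop :=
  G 0 /\ (forall x y, G x -> G y -> G (x + y)) /\
  exists s : seq nat, forall x, ~~ G x -> x \in s.

(* x is the element g_j of G (elements listed increasingly g_0 < g_1 < ...) *)
Definition nth_elem (G : pred nat) (j x : nat) : bool :=
  G x && (count G (iota 0 x) == j).

Definition perm_numerical_semigroup (n : nat) (G : pred nat) : Prop :=
  numerical_semigroup G /\
  (forall x, G x <-> gen (fun y => exists2 i, 1 <= i <= n & nth_elem G i y) x) /\
  (forall k r, r < n ->
     exists! i, (1 <= i <= n) /\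
       exists2 x, nth_elem G (k * n + i) x & x %% n = r).

Definition itv (u v : nat) : pred nat := fun x => u <= x <= v.
Definition itvinf (u : nat) : pred nat := fun x => u <= x.

Definition setlt (X Y : pred nat) : Prop := forall x y, X x -> Y y -> x < y.

Definition a_k (k : nat) : nat := 3 * k + 2.
Definition t_k (k : nat) : nat := (3 * k) %/ 2.
Definition S_k (k : nat) : nat -> Prop :=
  fun s => s = a_k k \/ s = a_k k + 1 \/ s = a_k k + 2.
Definition I_ik (i k : nat) : pred nat := itv (i * a_k k) (i * a_k k + 2 * i).
Definition H7 (k : nat) : pred nat :=
  fun x => has (fun i => I_ik i k x) (iota 0 (t_k k + 1))
           || itvinf ((t_k k + 1) * a_k k) x.

From mathcomp Require Import all_boot zify.
Set Implicit Arguments. Unset Strict Implicit. Unset Printing Implicit Defensive.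

(* The semigroup <a, a+1, a+2> is the union of the blocks [qa, qa + 2q], i.e.
   the set of x = qa + r (r < a) with r <= 2q; from q = a/2 on, the blocks
   cover all residues.  Block q < a/2 has 2q + 1 elements, so an element x of
   block j = min(q, a/2) satisfies rank x + ja = j^2 + x, where rank x counts
   the elements below x.  For a ≡ 2 (mod 3) this gives x ≡ rank x + [j ≡ 1]
   (mod 3).  The block index can only change inside a triple of ranks
   {3m+1, 3m+2, 3m+3} at a square rank j^2 in {3m+2, 3m+3}, which forces
   3 | j; so [j ≡ 1] is constant on each triple and the residues of its three
   elements are a cyclic shift of 1, 2, 3. *)

Section Rank.

Variable G : pred nat.

Definition rank x := count G (iota 0 x).

Lemma rankS x : rank x.+1 = rank x + G x.
Proof. by rewrite /rank -addn1 iotaD count_cat /= addn0. Qed.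

Lemma rankD x n : rank (x + n) = rank x + count G (iota x n).
Proof. by rewrite /rank iotaD count_cat. Qed.

Lemma leq_rank : {homo rank : x y / x <= y}.
Proof. by move=> x y /subnK <-; rewrite addnC rankD leq_addr. Qed.

Lemma ltn_rank x y : G x -> x < y -> rank x < rank y.
Proof. by move=> Gx /leq_rank; rewrite rankS Gx addn1. Qed.

Lemma rank_inj : {in G &, injective rank}.
Proof.
move=> x y Gx Gy exy; case: (ltngtP x y) => // [/(ltn_rank Gx)|/(ltn_rank Gy)];
  by rewrite exy ltnn.
Qed.

Variable N : nat.
Hypothesis G_tail : forall x, N <= x -> G x.

Lemma rank_surj j : exists2 x, G x & rank x = j.
Proof.
have ex_gt : exists y, j < rank y.
  exists (N + j.+1); rewrite rankD (@eq_in_count _ _ predT) ?count_predT ?size_iota.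
    by rewrite ltn_addl.
  by move=> x; rewrite mem_iota => /andP[/G_tail].
case: (ex_minnP ex_gt) => -[//|x]; rewrite rankS => rank_x min_x.
have le_x : rank x <= j by rewrite leqNgt; apply/negP => /min_x; rewrite ltnn.
by exists x; case: (G x) rank_x => /=; lia.
Qed.

End Rank.

Lemma nth_elemE G j x : nth_elem G j x = G x && (rank G x == j).
Proof. by []. Qed.

Lemma modn_inj_1n n i j : 0 < i <= n -> 0 < j <= n -> i = j %[mod n] -> i = j.
Proof.
wlog le_ij : i j / i <= j => [sym|] Hi Hj eij.
  by case: (leqP i j) => [|/ltnW] le; [|symmetry]; apply: sym.
apply/eqP; rewrite eqn_leq le_ij leqNgt; apply/negP => lt_ij.
have : n <= j - i by apply: dvdn_leq; [lia | rewrite -eqn_mod_dvd // eij].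
lia.
Qed.

Lemma modnD_surj_1n n e r : r < n ->
  exists2 i, 0 < i <= n & (i + e) %% n = r.
Proof.
move=> lt_rn; set d := (e + n - r) %% n.
have lt_dn : d < n by rewrite ltn_mod; lia.
exists (n - d); first lia.
have := divn_eq (e + n - r) n; rewrite -/d => ed.
have -> : n - d + e = (e + n - r) %/ n * n + r by lia.
by rewrite modnMDl modn_small.
Qed.

Lemma perm_window_shift n G k e :
  (forall i, 0 < i <= n -> exists x, nth_elem G (k * n + i) x) ->
  (forall i x, 0 < i <= n -> nth_elem G (k * n + i) x -> x %% n = (i + e) %% n) ->
  forall r, r < n -> exists! i, (1 <= i <= n) /\
    exists2 x, nth_elem G (k * n + i) x & x %% n = r.
Proof.
move=> elem_ex elem_mod r /(modnD_surj_1n e) [i Hi ei].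
exists i; split.
  by split=> //; have [x Hx] := elem_ex i Hi; exists x; rewrite ?(elem_mod _ _ Hi Hx).
move=> j [Hj [x Hx xr]]; apply: (modn_inj_1n Hi Hj).
by apply/eqP; rewrite -(eqn_modDr e) ei -xr (elem_mod _ _ Hj Hx).
Qed.

Lemma gen_add P x y : gen P x -> gen P y -> gen P (x + y).
Proof. by move=> Px; elim=> [|z s _ Pxz Ps]; rewrite ?addn0 ?addnA; [|apply: genS]. Qed.

Lemma eq_gen (P Q : nat -> Prop) :
  (forall s, P s <-> Q s) -> forall x, gen P x <-> gen Q x.
Proof.
suff sub P' Q' : (forall s, P' s -> Q' s) -> forall x, gen P' x -> gen Q' x.
  by move=> PQ x; split; apply: sub => s /PQ.
by move=> PQ x; elim=> [|z s _ Qz /PQ Qs]; [apply: gen0 | apply: genS].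
Qed.

Section IntervalGenerators.

Variables a d : nat.

Lemma gen_itvP x :
  gen (fun s => a <= s <= a + d) x <-> exists i, i * a <= x <= i * a + i * d.
Proof.
split.
  elim=> [|y s _ [i Hi] Hs]; first by exists 0.
  by exists i.+1; lia.
case=> i; elim: i x => [|i IHi] x Hx.
  by move: Hx; rewrite !mul0n leqn0 => /eqP ->; apply: gen0.
set s := a + minn (x - i.+1 * a) d.
have -> : x = (x - s) + s by lia.
by apply: genS; [apply: IHi | ]; lia.
Qed.

(* The semigroup generated by [a, a + d], see [itv_sgP] and [gen_itvP]. *)
Definition itv_sg : pred nat := fun x => x %% a <= d * (x %/ a).

Hypothesis a_gt0 : 0 < a.

Lemma itv_sgP x : itv_sg x <-> exists i, i * a <= x <= i * a + i * d.
Proof.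
rewrite /itv_sg; move: (divn_eq x a) (ltn_pmod x a_gt0).
move: (x %/ a) (x %% a) => q r -> lt_ra.
split=> [le_rq|[i /andP[le_ix le_xi]]]; first by exists q; lia.
case: (ltngtP i q) => [lt_iq|lt_qi|eq_iq]; last by lia.
- have : i.+1 * a <= q * a by rewrite leq_pmul2r.
  have : i * d <= q * d by rewrite leq_mul2r ltnW ?orbT.
  lia.
- have : q.+1 * a <= i * a by rewrite leq_pmul2r.
  lia.
Qed.

Lemma itv_sg_gen x : itv_sg x <-> gen (fun s => a <= s <= a + d) x.
Proof. exact: iff_trans (itv_sgP x) (iff_sym (gen_itvP x)). Qed.

End IntervalGenerators.

Lemma count_leq_iota m r : count (leq^~ m) (iota 0 r) = minn r m.+1.
Proof.
elim: r => [|r IHr]; first by rewrite min0n.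
by rewrite -addn1 iotaD count_cat IHr /= addn0; case: leqP; lia.
Qed.

Lemma sqr_triple_mod3 m s : 3 * m + 1 < s ^ 2 <= 3 * m + 3 -> s %% 3 = 0.
Proof.
by move: (s %/ 3) (s %% 3) (ltn_mod s 3) (divn_eq s 3) => u [|[|[|//]]] _ ->; lia.
Qed.

Section ThreeConsecutiveGenerators.

Variable a : nat.
Hypothesis a_gt0 : 0 < a.

Local Notation H := (itv_sg a 2).

(* Blocks from index a %/ 2 on are full, so they are merged into one. *)
Definition block x := minn (x %/ a) (a %/ 2).

Lemma count_block q r : r <= a -> count H (iota (q * a) r) = minn r (2 * q).+1.
Proof.
move=> le_ra; rewrite -[q * a]addn0 iotaDl count_map -count_leq_iota.
apply: eq_in_count => s; rewrite mem_iota add0n => /andP[_ lt_sr] /=.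
by rewrite /itv_sg modnMDl divnMDl // !modn_small ?divn_small ?addn0 //; lia.
Qed.

Lemma rank_mul q :
  rank H (q * a) + minn q (a %/ 2) * a = minn q (a %/ 2) ^ 2 + q * a.
Proof.
elim: q => [|q IHq]; first by rewrite min0n.
rewrite mulSnr rankD count_block //.
move: IHq; case: ltnP => [lt_qc|ge_qc].
  rewrite (minn_idPl lt_qc) (minn_idPr (_ : (2 * q).+1 <= a)); lia.
rewrite (minn_idPr (leqW ge_qc)) (minn_idPl (_ : a <= (2 * q).+1)); lia.
Qed.

Lemma rank_blockE x : H x -> rank H x = rank H (x %/ a * a) + x %% a.
Proof.
move=> Hx; rewrite {1}(divn_eq x a) rankD count_block ?(minn_idPl (leqW Hx)) //.
exact/ltnW/ltn_pmod.
Qed.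

Lemma rank_itv_sg x : H x -> rank H x + block x * a = block x ^ 2 + x.
Proof.
move=> /rank_blockE ->; move: (rank_mul (x %/ a)) (divn_eq x a); rewrite /block.
by move: (x %/ a) (x %% a) => q r; lia.
Qed.

Lemma rank_lt_sqr_blockS x : H x -> block x < a %/ 2 -> rank H x < (block x).+1 ^ 2.
Proof.
move=> Hx; rewrite /block gtn_min ltnn orbF => lt_qc.
rewrite rank_blockE //; have := rank_mul (x %/ a); rewrite (minn_idPl (ltnW lt_qc)).
by move: Hx; rewrite /itv_sg; move: (x %/ a) (x %% a) (rank H _) => q r R; lia.
Qed.

Lemma leq_block : {homo block : x y / x <= y}.
Proof.
by move=> x y le_xy; rewrite /block leq_min geq_minr andbT geq_min leq_div2r.
Qed.

Lemma block_sqr_leq_rank x : H x -> block x ^ 2 <= rank H x.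
Proof.
move=> /rank_itv_sg; have : block x * a <= x.
  by rewrite (leq_trans _ (leq_divM x a)) // leq_mul2r geq_minl orbT.
lia.
Qed.

Lemma rank_mod3 x : a %% 3 = 2 -> H x ->
  x %% 3 = (rank H x + (block x %% 3 == 1)) %% 3.
Proof.
(* x ≡ rank x + j a - j^2 ≡ rank x + j (2 - j), and j (2 - j) ≡ [j ≡ 1] (mod 3) *)
move=> a3 /rank_itv_sg; rewrite (divn_eq a 3) a3.
move: (block x) (rank H x) (a %/ 3) => j R u.
move: (j %/ 3) (j %% 3) (ltn_mod j 3) (divn_eq j 3) => s [|[|[|//]]] _ ->; lia.
Qed.

Lemma block_mod3_triple m x y : H x -> H y ->
  3 * m < rank H x <= 3 * m + 3 -> 3 * m < rank H y <= 3 * m + 3 ->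
  (block x %% 3 == 1) = (block y %% 3 == 1).
Proof.
wlog le_xy : x y / x <= y => [sym|Hx Hy rx ry].
  by case: (leqP x y) => [|/ltnW] le Hx Hy rx ry; [|symmetry]; apply: sym.
have := leq_block le_xy; rewrite leq_eqVlt => /orP[/eqP -> // | lt_b].
have lt_bx : block x < a %/ 2 by apply: leq_trans lt_b (geq_minr _ _).
have le_sqr : (block x).+1 ^ 2 <= block y ^ 2 by rewrite leq_sqr.
have := rank_lt_sqr_blockS Hx lt_bx; have := block_sqr_leq_rank Hy => bound_y bound_x.
have by3 : block y %% 3 = 0 by apply: (@sqr_triple_mod3 m); lia.
have bx3 : (block x).+1 %% 3 = 0 by apply: (@sqr_triple_mod3 m); lia.
by rewrite by3 (_ : block x %% 3 = 2) //; lia.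
Qed.

Lemma itv_sg_tail x : a %/ 2 * a <= x -> H x.
Proof.
rewrite -leq_divRL // /itv_sg; have := ltn_pmod x a_gt0.
by move: (x %/ a) (x %% a) => q r; lia.
Qed.

Lemma nth_elem_itv_sg i y :
  2 < a -> 0 < i <= 3 -> nth_elem H i y = (y == a + i.-1).
Proof.
move=> a_gt2 Hi; have lt_ia : i.-1 < a by lia.
have [q_ai r_ai] : (a + i.-1) %/ a = 1 /\ (a + i.-1) %% a = i.-1.
  by rewrite -[a in a + _]mul1n divnMDl // modnMDl divn_small ?modn_small.
have Hai : H (a + i.-1) by rewrite /itv_sg q_ai r_ai; lia.
have rank_ai : rank H (a + i.-1) = i.
  rewrite rank_blockE // q_ai r_ai; have := rank_mul 1.
  by rewrite (minn_idPl (_ : 1 <= a %/ 2)); lia.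
apply/idP/eqP => [/andP[Hy rank_y]|->]; last by rewrite nth_elemE Hai rank_ai eqxx.
by apply: (rank_inj Hy Hai); rewrite rank_ai; apply/eqP.
Qed.

End ThreeConsecutiveGenerators.

Lemma perm_numerical_semigroup_ext n G G' : G =1 G' ->
  perm_numerical_semigroup n G -> perm_numerical_semigroup n G'.
Proof.
move=> eGG'; have enth j x : nth_elem G j x = nth_elem G' j x.
  by rewrite /nth_elem eGG' (eq_count eGG').
case=> [[G0 [GD [s Gs]]] [Ggen Gperm]]; split; [split; [|split]|split].
- by rewrite -eGG'.
- by move=> x y; rewrite -!eGG'; apply: GD.
- by exists s => x; rewrite -eGG'; apply: Gs.
- move=> x; rewrite -eGG' Ggen; apply: eq_gen => y.
  by split=> -[i Hi]; [rewrite enth | rewrite -enth] => Hy; exists i.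
- move=> k r /(Gperm k) [i [Pi uniq_i]]; exists i.
  have E j : (1 <= j <= n) /\ (exists2 x, nth_elem G (k * n + j) x & x %% n = r) <->
             (1 <= j <= n) /\ (exists2 x, nth_elem G' (k * n + j) x & x %% n = r).
    by split=> -[Hj [x]]; rewrite ?enth => Hx xr; split=> //; exists x; rewrite ?enth.
  by split=> [|j /E]; [apply/E | apply: uniq_i].
Qed.

Theorem perm_itv_sg a :
  2 < a -> a %% 3 = 2 -> perm_numerical_semigroup 3 (itv_sg a 2).
Proof.
move=> a_gt2 a3; have a_gt0 : 0 < a by apply: ltn_trans a_gt2.
have genP := itv_sg_gen 2 a_gt0.
have tail := itv_sg_tail a_gt0.
split; [split; [|split] | split].
- by rewrite /itv_sg mod0n.
- by move=> x y /genP Gx /genP Gy; apply/genP/gen_add.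
- exists (iota 0 (a %/ 2 * a)) => x; rewrite mem_iota /= ltnNge.
  by apply: contra; apply: tail.
- move=> x; rewrite genP; apply: eq_gen => y.
  split=> [le_y | [i Hi]]; last by rewrite nth_elem_itv_sg // => /eqP ->; lia.
  by exists (y - a).+1; rewrite ?nth_elem_itv_sg //; try apply/eqP; lia.
- move=> m r lt_r3; have [x1 Hx1 rank_x1] := rank_surj tail (m * 3 + 1).
  apply: (perm_window_shift (e := block a x1 %% 3 == 1)) => // [i Hi | i x Hi].
    have [x Hx rank_x] := rank_surj tail (m * 3 + i).
    by exists x; rewrite nth_elemE Hx rank_x eqxx.
  rewrite nth_elemE => /andP[Hx /eqP rank_x].
  rewrite (rank_mod3 a_gt0 a3 Hx) rank_x -addnA modnMDl.
  by rewrite (block_mod3_triple (m := m) a_gt0 Hx Hx1) // ?rank_x ?rank_x1; lia.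
Qed.

Lemma t_kE k : t_k k + 1 = a_k k %/ 2.
Proof. rewrite /t_k /a_k; lia. Qed.

Lemma H7_itv_sg k : H7 k =1 itv_sg (a_k k) 2.
Proof.
have a_gt0 : 0 < a_k k by rewrite /a_k addn2.
move=> x; apply/idP/idP.
- case/orP => [/hasP[i _ /andP[le_ix le_xi]] | tail].
    by apply/(itv_sgP 2 a_gt0); exists i; lia.
  by apply: itv_sg_tail; rewrite // -t_kE.
move/(itv_sgP 2 a_gt0) => [i /andP[le_ix le_xi]]; apply/orP.
case: (leqP i (t_k k)) => [le_it | lt_ti]; [left | right].
  by apply/hasP; exists i; rewrite ?mem_iota /I_ik /itv; lia.
by apply: leq_trans le_ix; rewrite leq_mul2r; lia.
Qed.

Theorem lemma4p7 (k : nat) (hk : 0 < k) :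
  (forall x, gen (S_k k) x <-> H7 k x) /\
  ((forall i, i <= t_k k -> setlt (I_ik i k) (I_ik i.+1 k)) /\
   setlt (I_ik (t_k k) k) (itvinf ((t_k k + 1) * a_k k))) /\
  perm_numerical_semigroup 3 (H7 k).
Proof.
have a_gt0 : 0 < a_k k by rewrite /a_k addn2.
have S_kE s : S_k k s <-> a_k k <= s <= a_k k + 2 by rewrite /S_k; lia.
split; [|split; [split|]].
- by move=> x; rewrite H7_itv_sg (eq_gen S_kE) itv_sg_gen.
- move=> i le_it x y; rewrite /I_ik /itv /t_k /a_k in le_it *; lia.
- move=> x y; rewrite /I_ik /itv /itvinf /t_k /a_k; lia.
apply: perm_numerical_semigroup_ext (fsym (H7_itv_sg k)) _.
by apply: perm_itv_sg; rewrite /a_k; lia.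
Qed.
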